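(* Let $d\ge 1$ and let $B$ be a $d\times d$ integral matrix with $|\det(B)|=2$. Then $B$ is integrally similar to a $d\times d$ integral matrix $A$ with the following properties: (1) $A\mathbb{Z}^d=A^\tau\mathbb{Z}^d$; (2) there exists $\vec{\ell}_A\in\mathbb{Z}^d$ such that $\mathbb{Z}^d=(\vec{\ell}_A+A\mathbb{Z}^d)\,\dot\cup\, A\mathbb{Z}^d$ (disjoint union); (3) there exists $\vec{q}_A\in\mathbb{Z}^d$ such that $\vec{q}_A\circ A\mathbb{Z}^d\subseteq 2\mathbb{Z}$ and $\vec{q}_A\circ(\vec{\ell}_A+A\mathbb{Z}^d)\subseteq 2\mathbb{Z}+1$; (4) for every $\vec m\in A\mathbb{Z}^d$ and every $\vec n\in\mathbb{Z}^d$, $\mathbb{Z}^d=(\vec n-A\mathbb{Z}^d)\,\dot\cup\,(\vec{\ell}_A-\vec m-\vec n+A\mathbb{Z}^d)$; (5) for every $\vec m\in\vec{\ell}_A+A\mathbb{Z}^d$ and every $\vec n\in\mathbb{Z}^d$, $\vec n-A\mathbb{Z}^d=\vec{\ell}_A-\vec m-\vec n+A\mathbb{Z}^d$.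
   Context: $A^\tau$ denotes the transpose of $A$. For $\vec x,\vec y\in\mathbb{C}^d$, $\vec x\circ\vec y=\sum_{j=1}^d x_j\overline{y_j}$; for a set $X$ of vectors, $\vec q\circ X=\{\vec q\circ\vec x:\vec x\in X\}$. An integral matrix $B$ is integrally similar to an integral matrix $C$ if $C=SBS^{-1}$ for some integral matrix $S$ whose inverse $S^{-1}$ is also integral. $\dot\cup$ denotes disjoint union. *)

From HB Require Import structures.
From mathcomp Require Import all_boot all_order all_algebra.
Set Implicit Arguments.
Unset Strict Implicit.
Unset Printing Implicit Defensive.
Import Order.TTheory GRing.Theory Num.Theory.
Local Open Scope ring_scope.

(* B is integrally similar to A: A = S B S^{-1} with S integral and S^{-1}
   integral, i.e. S is a unit of the matrix ring over int. *)
Definition int_similar (d : nat) (B A : 'M[int]_d) : Prop :=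
  exists S : 'M[int]_d, S \in unitmx /\ A = S *m B *m invmx S.

Definition inLat (d : nat) (A : 'M[int]_d) (v : 'cV[int]_d) : Prop :=
  exists x : 'cV[int]_d, v = A *m x.

(* x o y = sum_j x_j * conj(y_j); on integer vectors conj is the identity *)
Definition dotz (d : nat) (x y : 'cV[int]_d) : int :=
  \sum_(j < d) x j 0 * y j 0.

Definition disj_cover (d : nat) (X Y : 'cV[int]_d -> Prop) : Prop :=
  forall v : 'cV[int]_d, (X v \/ Y v) /\ ~ (X v /\ Y v).

From HB Require Import structures.
From mathcomp Require Import all_boot all_order all_algebra.
From mathcomp Require Import zify.
Import Order.TTheory GRing.Theory Num.Theory.
Set Implicit Arguments.
Unset Strict Implicit.
Unset Printing Implicit Defensive.
Local Open Scope ring_scope.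

(* By the Smith normal form, B = P D Q with P, Q unimodular and
   D = diag(+-1, ..., +-1, +-2).  Hence every conjugate A of B has A Z^d of
   index 2: it is the set of v on which an integral linear form q is even,
   and any l with q.l odd gives properties (2)-(5) by a parity count.
   Property (1) depends on the conjugating matrix.  Conjugating by T Q, the
   forms defining A Z^d and A^T Z^d are the last rows of (T Q P)^-1 and of
   T^T; they agree mod 2 as soon as the last row of the Gram matrix T^T T is
   congruent to the last row of (Q P)^-1, and a suitable shear T exists
   because that row is not even. *)

Lemma dvdz_congr (m x y : int) : (m %| x - y)%Z -> (m %| x)%Z = (m %| y)%Z.
Proof. by move=> mxy; rewrite -[x](subrK y) rpredDl. Qed.

Lemma dvdz_mulmx_sub (m : int) p k q (X Y : 'M[int]_(p, k))
    (M : 'M[int]_(k, q)) :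
  (forall i j, (m %| X i j - Y i j)%Z) ->
  forall i j, (m %| (X *m M) i j - (Y *m M) i j)%Z.
Proof.
move=> mXY i j.
have -> : (X *m M) i j - (Y *m M) i j = ((X - Y) *m M) i j.
  by rewrite mulmxBl [RHS]mxE [(- (Y *m M)) i j]mxE.
rewrite mxE.
by apply: rpred_sum => l _; apply: dvdz_mulr; rewrite !mxE; apply: mXY.
Qed.

Lemma invmxM (R : comUnitRingType) n (X Y : 'M[R]_n) : X \in unitmx -> Y \in unitmx ->
  invmx (X *m Y) = invmx Y *m invmx X.
Proof.
move=> uX uY; have uXY : X *m Y \in unitmx by rewrite unitmx_mul uX.
have XYinv : X *m Y *m (invmx Y *m invmx X) = 1%:M.
  by rewrite -mulmxA (mulKVmx uY) (mulmxV uX).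
by rewrite -[LHS]mulmx1 -XYinv mulmxA (mulVmx uXY) mul1mx.
Qed.

Lemma unitmx_1D_sqr0 (R : comUnitRingType) n (E : 'M[R]_n) : E *m E = 0 -> 1%:M + E \in unitmx.
Proof.
move=> EE; have [] // := @mulmx1_unit _ _ (1%:M + E) (1%:M - E).
by rewrite mulmxDl !mulmxBr !mul1mx !mulmx1 EE subr0 subrK.
Qed.

Lemma unitmx_row_odd n (M : 'M[int]_n) i : M \in unitmx ->
  exists k, ~~ (2 %| row i M ord0 k)%Z.
Proof.
move=> uM; apply/existsP; rewrite -negb_forall; apply/negP => /forallP Meven.
have /matrixP/(_ i i) := mulmxV uM; rewrite !mxE eqxx => M1.
have : (2 %| \sum_j M i j * invmx M j i)%Z.
  by apply: rpred_sum => j _; apply: dvdz_mulr; have := Meven j; rewrite mxE.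
by rewrite M1.
Qed.

Lemma dotzE d (q v : 'cV[int]_d) : dotz q v = (q^T *m v) 0 0.
Proof. by rewrite mxE; apply: eq_bigr => j _; rewrite mxE. Qed.

Lemma sqr_dvdz2 (x : int) : (x * x %| 2)%Z -> `|x| = 1.
Proof.
rewrite dvdzE abszM -abszE => x2; have := @dvdn_leq _ 2 isT x2.
by case: `|x|%N x2 => [|[|k]] //= _; nia.
Qed.

Lemma Smith_det2 n (ds : seq int) : sorted dvdz ds ->
  `|\prod_(i < n.+1) ds`_i| = 2 ->
  (forall i, (i < n)%N -> `|ds`_i| = 1) /\ `|ds`_n| = 2.
Proof.
move=> sorted_ds; rewrite big_ord_recr /=; set p := \prod_(i < n) _ => det2.
have dsn0 : ds`_n != 0 by apply/eqP=> dsn0; move: det2; rewrite dsn0 mulr0 normr0.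
have n_ds : (n < size ds)%N.
  by rewrite ltnNge; apply: contra dsn0 => /(nth_default 0) ->.
have det2N : `|(p * ds`_n)%R|%N = 2%N by apply/eqP; rewrite -eqz_nat abszE det2.
have unit_ds i : (i < n)%N -> `|ds`_i| = 1.
  move=> lt_in; apply: sqr_dvdz2; rewrite dvdzE [X in (_ %| X)%N]/= -det2N -dvdzE.
  apply: dvdz_mul.
    by rewrite /p (bigD1 (Ordinal lt_in)) //= dvdz_mulr.
  apply: (sorted_ltn_nth dvdz_trans 0 sorted_ds) => //.
  by rewrite inE (ltn_trans lt_in).
split=> //; move: det2; rewrite normrM /p normr_prod big1 ?mul1r //.
by move=> i _; apply: unit_ds.
Qed.

Definition index2_diag n (r : 'rV[int]_n.+1) : Prop :=
  (forall i : 'I_n.+1, (i < n)%N -> `|r 0 i| = 1) /\ `|r 0 ord_max| = 2.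

Lemma Smith_index2 n (B : 'M[int]_n.+1) : `|\det B| = 2 ->
  exists P Q r, [/\ P \in unitmx, Q \in unitmx, index2_diag r &
                    B = P *m diag_mx r *m Q].
Proof.
have [P uP [Q uQ [ds sorted_ds ->]]] := int_Smith_normal_form B.
pose r := \row_(i < n.+1) ds`_i.
have -> : \matrix_(i, j) (ds`_i *+ (i == j :> nat)) = diag_mx r.
  by apply/matrixP => i j; rewrite !mxE.
have unit_det1 (M : 'M[int]_n.+1) : M \in unitmx -> `|\det M| = 1.
  by rewrite unitmxE; move: (\det M); lia.
rewrite !det_mulmx det_diag !normrM (unit_det1 P) ?(unit_det1 Q) // mulr1 mul1r.
under eq_bigr do rewrite mxE.
move=> /(Smith_det2 sorted_ds) [ds1 ds2].
by exists P, Q, r; split=> //; split=> [i /ds1|]; rewrite mxE.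
Qed.

Section Index2Diag.
Variables (n : nat) (r : 'rV[int]_n.+1).
Hypothesis r_index2 : index2_diag r.

Lemma inLat_index2_diag w :
  inLat (diag_mx r) w <-> (2 %| w ord_max ord0)%Z.
Proof.
have [r1 r2] := r_index2.
have r2N : `|r ord0 ord_max|%N = 2%N by apply/eqP; rewrite -eqz_nat abszE r2.
have r_dvd i : (r ord0 i %| w i ord0)%Z \/ i = ord_max.
  case: (ltnP i n) => [/r1 ri1|]; last first.
    by right; apply: val_inj; apply/eqP; rewrite eqn_leq -ltnS ltn_ord.
  have riN : `|r ord0 i|%N = 1%N by apply/eqP; rewrite -eqz_nat abszE ri1.
  by left; rewrite dvdzE riN dvd1n.
split=> [[x ->]|w2].
  by rewrite mul_diag_mx mxE dvdz_mulr // dvdzE r2N.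
exists (\col_i (w i ord0 %/ r ord0 i)%Z).
apply/matrixP => i j; rewrite mul_diag_mx !mxE (ord1 j) mulrC divzK //.
by case: (r_dvd i) => // ->; rewrite dvdzE r2N.
Qed.

Lemma inLat_unit_index2_diag (X Y : 'M[int]_n.+1) v :
  X \in unitmx -> Y \in unitmx ->
  inLat (X *m diag_mx r *m Y) v <->
  (2 %| (row ord_max (invmx X) *m v) ord0 ord0)%Z.
Proof.
move=> uX uY; rewrite -row_mul mxE -inLat_index2_diag; split=> [[x ->]|[y yE]].
  by exists (Y *m x); rewrite -!mulmxA (mulKmx uX).
by exists (invmx Y *m y); rewrite -!mulmxA (mulKVmx uY) -yE (mulKVmx uX).
Qed.

End Index2Diag.

Section Shear.
Variable R : comUnitRingType.

Definition e_last n : 'rV[R]_n.+1 := delta_mx 0 ord_max.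

Definition shear_mx n (al : 'rV[R]_n.+1) (be : 'cV[R]_n.+1) : 'M[R]_n.+1 :=
  1%:M + (e_last n)^T *m al + be *m e_last n.

Variables (n : nat) (al : 'rV[R]_n.+1) (be : 'cV[R]_n.+1).
Local Notation e := (e_last n).
Hypotheses (al_e : al *m e^T = 0) (e_be : e *m be = 0) (al_be : al *m be = 0).

Lemma e_lastK : e *m e^T = 1%:M.
Proof.
by rewrite /e_last trmx_delta mul_delta_mx; apply/matrixP => i j; rewrite !ord1 !mxE.
Qed.

Lemma shear_unitmx : shear_mx al be \in unitmx.
Proof.
have -> : shear_mx al be = (1%:M + e^T *m al) *m (1%:M + be *m e).
  have cross : e^T *m al *m (be *m e) = 0.
    by rewrite mulmxA -(mulmxA _ al) al_be mulmx0 mul0mx.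
  by rewrite /shear_mx mulmxDl !mulmxDr !mul1mx !mulmx1 cross addr0 addrAC.
rewrite unitmx_mul !unitmx_1D_sqr0 // -mulmxA.
  by rewrite (mulmxA e) e_be mul0mx mulmx0.
by rewrite (mulmxA al) al_e mul0mx mulmx0.
Qed.

Lemma shear_gram_last_row :
  e *m ((shear_mx al be)^T *m shear_mx al be) =
  e + be^T + al + (be^T *m be) *m e.
Proof.
set T := shear_mx al be.
have Te : T *m e^T = e^T + be.
  rewrite /T /shear_mx !mulmxDl mul1mx -!mulmxA al_e e_lastK.
  by rewrite mulmx0 mulmx1 addr0.
have be_e : be^T *m e^T = 0 by rewrite -trmx_mul e_be trmx0.
have eT : e *m T^T = e + be^T.
  by rewrite -[in LHS](trmxK e) -trmx_mul Te linearD /= trmxK.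
rewrite mulmxA eT /T /shear_mx mulmxDl !mulmxDr !mulmx1 !mulmxA e_lastK.
by rewrite mul1mx be_e mul0mx e_be mul0mx !addr0 addrA (addrAC e al).
Qed.

End Shear.
Arguments e_last {R} n.

Lemma gram_last_row_mod2 n (a : 'rV[int]_n.+1) k : ~~ (2 %| a ord0 k)%Z ->
  exists2 T : 'M[int]_n.+1, T \in unitmx &
    forall j, (2 %| (e_last n *m (T^T *m T)) ord0 j - a ord0 j)%Z.
Proof.
move=> a_k_odd.
have shear_spec (al : 'rV[int]_n.+1) (be : 'cV[int]_n.+1) :
    al ord0 ord_max = 0 -> be ord_max ord0 = 0 -> al *m be = 0 ->
    shear_mx al be \in unitmx /\ forall j,
    (e_last n *m ((shear_mx al be)^T *m shear_mx al be)) 0 j =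
    (j == ord_max)%:R + be j 0 + al 0 j + (be^T *m be) 0 0 * (j == ord_max)%:R.
  move=> al_N be_N al_be.
  have al_e : al *m (e_last n)^T = 0.
    by rewrite /e_last trmx_delta -colE; apply/matrixP => i i'; rewrite !mxE !ord1.
  have e_be : e_last n *m be = 0.
    by rewrite /e_last -rowE; apply/matrixP => i i'; rewrite !mxE !ord1.
  split=> [|j]; first exact: shear_unitmx.
  by rewrite shear_gram_last_row // !mxE big_ord1 !mxE.
have [a_N_even|a_N_odd] := boolP (2 %| a ord0 ord_max)%Z.
- (* With be = e_k the Gram row is 2 e + e_k + al: the two copies of e
     cancel mod 2 and e_k supplies the odd entry a_k. *)
  have k_N : k != ord_max by apply: contraNneq a_k_odd => ->.
  pose al := \row_j (if (j == ord_max) || (j == k) then 0 else a ord0 j).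
  pose be : 'cV[int]_n.+1 := delta_mx k 0.
  have al_N : al ord0 ord_max = 0 by rewrite mxE eqxx.
  have be_N : be ord_max ord0 = 0 by rewrite mxE eq_sym (negbTE k_N).
  have al_be : al *m be = 0.
    by rewrite -colE; apply/matrixP => i i'; rewrite !mxE eqxx orbT.
  have be_be : (be^T *m be) 0 0 = 1 by rewrite trmx_delta mul_delta_mx mxE.
  have [uT gramT] := shear_spec al be al_N be_N al_be.
  exists (shear_mx al be) => // j; rewrite gramT.
  rewrite be_be !mxE; case: (eqVneq j ord_max) => [->|j_N].
    by rewrite eq_sym (negbTE k_N) /=; move: a_N_even; lia.
  case: (eqVneq j k) => [->|j_k] /=; first by move: a_k_odd; lia.
  by lia.
- pose al := \row_j (if j == ord_max then 0 else a ord0 j).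
  pose be : 'cV[int]_n.+1 := 0.
  have al_N : al ord0 ord_max = 0 by rewrite mxE eqxx.
  have be_N : be ord_max ord0 = 0 by rewrite mxE.
  have al_be : al *m be = 0 by rewrite mulmx0.
  have [uT gramT] := shear_spec al be al_N be_N al_be.
  exists (shear_mx al be) => // j; rewrite gramT.
  rewrite mulmx0 !mxE; case: (eqVneq j ord_max) => [->|j_N] /=.
    by move: a_N_odd; lia.
  by lia.
Qed.

Lemma index2_similar_self_dual n (B : 'M[int]_n.+1) : `|\det B| = 2 ->
  exists A (q : 'cV[int]_n.+1), [/\ int_similar B A,
    exists k, ~~ (2 %| q k ord0)%Z,
    forall v, inLat A v <-> (2 %| dotz q v)%Z &
    forall v, inLat A^T v <-> (2 %| dotz q v)%Z].
Proof.
move=> /Smith_index2 [P [Q [r [uP uQ r_index2 ->]]]].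
set U := Q *m P; have uU : U \in unitmx by rewrite unitmx_mul uQ.
have [k a_k_odd] : exists k, ~~ (2 %| row ord_max (invmx U) ord0 k)%Z.
  by apply: unitmx_row_odd; rewrite unitmx_inv.
have [T uT gramT] := gram_last_row_mod2 a_k_odd.
have uTU : T *m U \in unitmx by rewrite unitmx_mul uT.
set y := row ord_max (invmx (T *m U)).
exists (T *m U *m diag_mx r *m invmx T), y^T; split.
- exists (T *m Q); rewrite unitmx_mul uT uQ; split=> //.
  by rewrite invmxM // !mulmxA (mulmxK uQ).
- have [j y_j_odd] : exists j, ~~ (2 %| y ord0 j)%Z.
    by apply: unitmx_row_odd; rewrite unitmx_inv.
  by exists j; rewrite mxE.
- by move=> v; rewrite dotzE trmxK inLat_unit_index2_diag // unitmx_inv.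
have -> : (T *m U *m diag_mx r *m invmx T)^T =
          (invmx T)^T *m diag_mx r *m (T *m U)^T.
  by rewrite !trmx_mul tr_diag_mx !mulmxA.
move=> v; rewrite dotzE trmxK inLat_unit_index2_diag ?unitmx_tr ?unitmx_inv //.
rewrite trmx_inv invmxK.
have T_y : forall i j, (2 %| row ord_max T^T i j - y i j)%Z.
  have -> : row ord_max T^T = e_last n *m (T^T *m T) *m invmx T.
    by rewrite mulmxA mulmxK // -rowE.
  rewrite /y invmxM // row_mul.
  by apply: dvdz_mulmx_sub => i j; rewrite ord1.
by rewrite (dvdz_congr (dvdz_mulmx_sub v T_y ord0 ord0)).
Qed.

Lemma inLat_cosetD d (A : 'M[int]_d) (v w : 'cV[int]_d) :
  (exists x, v = w + A *m x) <-> inLat A (v - w).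
Proof.
by split=> [[x ->]|[x xE]]; exists x; [rewrite addrC addKr | rewrite -xE addrC subrK].
Qed.

Lemma inLat_cosetB d (A : 'M[int]_d) (v w : 'cV[int]_d) :
  (exists x, v = w - A *m x) <-> inLat A (w - v).
Proof.
split=> [[x ->]|[x xE]]; exists x; first by rewrite opprB addrC subrK.
by rewrite -xE opprB addrC subrK.
Qed.

Lemma dotzBr d (q v w : 'cV[int]_d) : dotz q (v - w) = dotz q v - dotz q w.
Proof. by rewrite !dotzE mulmxBr !mxE. Qed.

Section Index2Lattice.
Variables (d : nat) (A : 'M[int]_d) (q l : 'cV[int]_d).
Hypothesis inLatA : forall v, inLat A v <-> (2 %| dotz q v)%Z.
Hypothesis q_l_odd : ~~ (2 %| dotz q l)%Z.

Lemma index2_disj_cover : disj_cover (fun v => inLat A (v - l)) (inLat A).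
Proof. by move=> v /=; rewrite !inLatA dotzBr; move: q_l_odd; lia. Qed.

Lemma index2_dotz_parity :
  (forall v, inLat A v -> (2 %| dotz q v)%Z) /\
  (forall v, inLat A (v - l) -> ~~ (2 %| dotz q v)%Z).
Proof. by split=> v; rewrite inLatA // dotzBr; move: q_l_odd; lia. Qed.

Lemma index2_disj_cover_reflect (m n : 'cV[int]_d) : inLat A m ->
  disj_cover (fun v => exists x, v = n - A *m x)
             (fun v => exists x, v = l - m - n + A *m x).
Proof.
rewrite inLatA => q_m_even v /=.
rewrite inLat_cosetB inLat_cosetD !inLatA !dotzBr.
by move: q_l_odd q_m_even; lia.
Qed.

Lemma index2_reflect_coset (m n : 'cV[int]_d) : inLat A (m - l) ->
  forall v, (exists x, v = n - A *m x) <-> (exists x, v = l - m - n + A *m x).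
Proof.
rewrite inLatA dotzBr => q_ml_even v.
rewrite inLat_cosetB inLat_cosetD !inLatA !dotzBr.
by move: q_l_odd q_ml_even; lia.
Qed.

End Index2Lattice.

Theorem theorem4p1 (d : nat) (hd : (0 < d)%N) (B : 'M[int]_d)
    (hB : `|\det B| = 2) :
  exists A : 'M[int]_d,
    int_similar B A /\
    (* (1) A Z^d = A^T Z^d *)
    (forall v : 'cV[int]_d, inLat A v <-> inLat A^T v) /\
    exists l : 'cV[int]_d,
      (* (2) Z^d = (l + A Z^d) disjoint-union A Z^d *)
      disj_cover (fun v => inLat A (v - l)) (fun v => inLat A v) /\
      (* (3) *)
      (exists q : 'cV[int]_d,
         (forall v, inLat A v -> (2 %| dotz q v)%Z) /\
         (forall v, inLat A (v - l) -> ~~ (2 %| dotz q v)%Z)) /\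
      (* (4) *)
      (forall m n : 'cV[int]_d, inLat A m ->
         disj_cover (fun v => exists x, v = n - A *m x)
                    (fun v => exists x, v = l - m - n + A *m x)) /\
      (* (5) *)
      (forall m n : 'cV[int]_d, inLat A (m - l) ->
         forall v : 'cV[int]_d,
           (exists x, v = n - A *m x) <-> (exists x, v = l - m - n + A *m x)).
Proof.
case: d hd B hB => [//|d] _ B /index2_similar_self_dual.
move=> [A [q [simBA [k q_k_odd] inLatA inLatAT]]].
have q_l_odd : ~~ (2 %| dotz q (delta_mx k ord0))%Z.
  by rewrite dotzE -colE !mxE.
exists A; split=> //; split=> [v|]; first by rewrite inLatA inLatAT.
exists (delta_mx k 0); split; first exact: index2_disj_cover.
split; first by exists q; exact: index2_dotz_parity.
split; [exact: index2_disj_cover_reflect | exact: index2_reflect_coset].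
Qed.
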